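(* Let $f$ be a nonzero polynomial whose multiset of reproducible zeros equals its full zero multiset, $R(f)=Z(f)$, and write $$R(f)=Z(f)=\{\underbrace{\beta_1,\dots,\beta_1}_{r_1},\dots,\underbrace{\beta_n,\dots,\beta_n}_{r_n}\}$$ with $\beta_1,\dots,\beta_n$ distinct. Then $$[f]=\Big(\operatorname{span}\big\{k_{\beta_j}^{(\ell)}:0\le\ell\le r_j-1,\ 1\le j\le n\big\}\Big)^{\perp}.$$
   Context: Standing assumptions: $\Omega\subset\mathbb C$ is a domain with $0\in\Omega$, $\mathcal H$ is a Hilbert space of analytic functions on $\Omega$ with bounded point evaluations at points of $\Omega$, the shift $(Sf)(z)=zf(z)$ is bounded on $\mathcal H$, and the polynomials $\mathcal P$ are dense in $\mathcal H$. For $g\in\mathcal H$, $[g]$ is the closure in $\mathcal H$ of $\operatorname{span}\{z^kg:k\ge0\}$. A point $\beta\in\mathbb C$ is reproducible of order $m\ge0$ if $p\mapsto p^{(m)}(\beta)$ on $\mathcal P$ extends to a bounded linear functional on $\mathcal H$; $k_\beta^{(m)}\in\mathcal H$ denotes the element representing this functional, $\langle g,k_\beta^{(m)}\rangle=g^{(m)}(\beta)$ (the value of the extension). $\beta$ is a reproducible point if reproducible of order $0$; reproducibility of order $m$ implies that of all orders $j\le m$; $\operatorname{ro}(\beta)\in\{0,1,\dots\}\cup\{\infty\}$ is the supremum of the orders of reproducibility. For a nonzero polynomial $p$: $Z(p)$ is its zero multiset (each zero listed with its multiplicity), and $R(p)$ is its multiset of reproducible zeros: each reproducible point $\beta$ at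 which $p$ has a zero of order $m\ge1$ is listed $\min\{m,\operatorname{ro}(\beta)+1\}$ times, and non-reproducible zeros are omitted. *)

From HB Require Import structures.
From mathcomp Require Import all_boot all_order all_algebra.
From mathcomp Require Import complex.
From mathcomp Require Import boolp classical_sets reals.
Set Implicit Arguments. Unset Strict Implicit. Unset Printing Implicit Defensive.
Import Order.TTheory GRing.Theory Num.Theory.
Local Open Scope ring_scope.

Section AHS.
Variable R : realType.
Local Notation C := (R[i]).

Definition openC (A : set C) : Prop :=
  forall z, A z -> exists2 r : C, 0 < r & forall w, `|w - z| < r -> A w.

Definition connectedC (A : set C) : Prop :=
  forall U1 U2 : set C, openC U1 -> openC U2 ->
    (forall z, A z -> U1 z \/ U2 z) ->
    (forall z, ~ (A z /\ U1 z /\ U2 z)) ->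
    (forall z, ~ (A z /\ U1 z)) \/ (forall z, ~ (A z /\ U2 z)).

Definition domainC (A : set C) : Prop := openC A /\ connectedC A.

Definition C_differentiable (g : C -> C) (z : C) : Prop :=
  exists d : C, forall e : C, 0 < e -> exists2 del : C, 0 < del &
    forall w, 0 < `|w - z| < del -> `|(g w - g z) / (w - z) - d| < e.

Definition analytic_on (A : set C) (g : C -> C) : Prop :=
  forall z, A z -> C_differentiable g z.

Variable V : lmodType C.
Variable ip : V -> V -> C.        (* inner product, linear in the first variable *)

Definition nrm (v : V) : C := sqrtC (ip v v).

Definition is_inner_product : Prop :=
  [/\ forall a u v w, ip (a *: u + v) w = a * ip u w + ip v w,
      forall u v, ip u v = (ip v u)^*,
      forall v, 0 <= ip v v &
      forall v, ip v v = 0 -> v = 0].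

Definition cauchy_seq (u : nat -> V) : Prop :=
  forall e : C, 0 < e -> exists N, forall m n, (N <= m)%N -> (N <= n)%N ->
    nrm (u m - u n) < e.

Definition converges_to (u : nat -> V) (v : V) : Prop :=
  forall e : C, 0 < e -> exists N, forall n, (N <= n)%N -> nrm (u n - v) < e.

Definition complete_space : Prop :=
  forall u : nat -> V, cauchy_seq u -> exists v, converges_to u v.

(** Standing assumptions: (V, ip) is a Hilbert space of analytic functions
    on the domain Om (elements are realized as functions through the
    injective linear map [ev]) with bounded point evaluations on Om; the
    shift [S] (Sf)(z) = z f(z) is a bounded operator on H; polynomials
    belong to H ([pv p] is the element of H equal to p on Om) and are dense. *)
Definition AnalyticHilbertSpace (Om : set C) (ev : V -> C -> C)
    (S : V -> V) (pv : {poly C} -> V) : Prop :=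
  [/\ (domainC Om /\ Om 0) /\ (is_inner_product /\ complete_space),
      (forall a u v z, ev (a *: u + v) z = a * ev u z + ev v z)
      /\ (forall u v, (forall z, Om z -> ev u z = ev v z) -> u = v),
      (forall v, analytic_on Om (ev v))
      /\ (forall z, Om z -> exists M : C, forall v, `|ev v z| <= M * nrm v),
      (forall v z, Om z -> ev (S v) z = z * ev v z)
      /\ (exists M : C, forall v, nrm (S v) <= M * nrm v) &
      (forall p z, Om z -> ev (pv p) z = p.[z])
      /\ (forall v e, 0 < e -> exists p, nrm (v - pv p) < e)].

Definition lspan (A : set V) : set V :=
  [set v | exists n (a : 'I_n -> C) (x : 'I_n -> V),
            (forall i, A (x i)) /\ v = \sum_(i < n) a i *: x i].

Definition closureH (A : set V) : set V :=
  [set v | forall e : C, 0 < e -> exists2 w, A w & nrm (v - w) < e].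

Definition orth (A : set V) : set V := [set v | forall w, A w -> ip v w = 0].

(** [g] : closure of span{ z^k g : k >= 0 } *)
Definition cyc (S : V -> V) (g : V) : set V :=
  closureH (lspan [set iter k S g | k in [set: nat]]).

Variable pv : {poly C} -> V.

Definition deriv_ext (beta : C) (m : nat) (L : V -> C) : Prop :=
  [/\ forall a u v, L (a *: u + v) = a * L u + L v,
      (exists M : C, forall v, `|L v| <= M * nrm v) &
      forall p : {poly C}, L (pv p) = (p^`(m)).[beta]].

Definition reproducible (m : nat) (beta : C) : Prop :=
  exists L, deriv_ext beta m L.

Definition is_kernel (beta : C) (m : nat) (k : V) : Prop :=
  exists L, deriv_ext beta m L /\ forall g, ip g k = L g.

(** ro(beta) : None stands for infinity; Some m for the finite supremum m. *)
Definition ro (beta : C) : option nat :=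
  if pselect (exists m, forall n, reproducible n beta -> (n <= m)%N)
  then Some (xget 0%N [set m | reproducible m beta /\
                              forall n, reproducible n beta -> (n <= m)%N])
  else None.

(** multiplicity of beta in the multiset Z(p) *)
Definition Zmult (p : {poly C}) (beta : C) : nat := mup beta p.

(** multiplicity of beta in the multiset R(p) *)
Definition Rmult (p : {poly C}) (beta : C) : nat :=
  if pselect (reproducible 0 beta) then
    match ro beta with
    | None => mup beta p
    | Some r => minn (mup beta p) r.+1
    end
  else 0%N.

End AHS.

From HB Require Import structures.
From mathcomp Require Import all_boot all_order all_algebra.
From mathcomp Require Import complex.
From mathcomp Require Import boolp classical_sets reals.
From mathcomp Require Import ring.
Set Implicit Arguments. Unset Strict Implicit. Unset Printing Implicit Defensive.
Import Order.TTheory GRing.Theory Num.Theory.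
Local Open Scope ring_scope.

(** - [f] is the closure of the multiples pv (q f) (the shift acts as
      multiplication by 'X on polynomials).
    - Inclusion: each x |-> <x, k_beta^(l)> is a bounded functional equal to
      p |-> p^(l)(beta) on polynomials, so it kills every multiple of f
      (its derivatives of order < mup beta f vanish at beta) and, by
      continuity, all of [f].
    - Converse: Hermite interpolation gives polynomials G_t, t = (beta, l, G),
      with p = sum_t p^(l)(beta) G_t modulo f for every p.  If g is
      orthogonal to K and p is a polynomial close to g, then
      p - sum_t p^(l)(beta) G_t is a multiple of f, and since
      p^(l)(beta) = <p - g, k_beta^(l)>, its distance to g is bounded by a
      constant times the distance from p to g.
    The hypothesis R(f) = Z(f) is what makes the kernels k_beta^(l),
    l < mup beta f, exist; here they are given.
    Norm estimates are done with the quadratic form Q(v) = <v, v> and the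
    parallelogram inequality Q(u + v) <= 2 Q(u) + 2 Q(v). *)

Section DerivativesAtARoot.
Variable F : fieldType.

Lemma derivn_XsubC_mul (b : F) (Q : {poly F}) m :
  (('X - b%:P) * Q)^`(m.+1) = Q^`(m) *+ m.+1 + ('X - b%:P) * Q^`(m.+1).
Proof.
elim: m => [|m IH].
  by rewrite derivn1 derivM derivXsubC mul1r derivn0 derivn1 mulr1n.
rewrite derivnS IH derivD derivMn derivM derivXsubC mul1r -!derivnS.
by rewrite addrA -mulrSr.
Qed.

Lemma derivn_XsubCX_mul_eval (b : F) (Q : {poly F}) m :
  ((('X - b%:P) ^+ m * Q)^`(m)).[b] = Q.[b] *+ m`!.
Proof.
elim: m Q => [|m IH] Q; first by rewrite expr0 mul1r derivn0.
rewrite exprS -mulrA derivn_XsubC_mul hornerD hornerMn IH.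
by rewrite hornerM hornerXsubC subrr mul0r addr0 -mulrnA factS mulnC.
Qed.

Lemma derivn_root_vanish (b : F) (P : {poly F}) k j :
  ('X - b%:P) ^+ k %| P -> (j < k)%N -> (P^`(j)).[b] = 0.
Proof.
move=> /dvdpP [q ->] ltjk.
rewrite -(subnKC (ltnW ltjk)) exprD mulrC -mulrA derivn_XsubCX_mul_eval.
by rewrite hornerM horner_exp hornerXsubC subrr expr0n subn_eq0 leqNgt ltjk
  mul0r mul0rn.
Qed.

Lemma derivn_mul_vanish (b : F) (f q : {poly F}) l :
  (l < mup b f)%N -> ((q * f)^`(l)).[b] = 0.
Proof.
have [->|fn0] := eqVneq f 0; first by rewrite mulr0 raddf0 horner0.
by move=> lt_l; apply: derivn_root_vanish lt_l; rewrite dvdp_mull // -mup_geq.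
Qed.

End DerivativesAtARoot.

Section HermiteInterpolation.
Variable F : closedFieldType.
Hypothesis F_char0 : has_pchar0 F.

Definition hermite_system (f : {poly F}) (s : seq (F * nat * {poly F})) :=
  (forall t, t \in s -> root f t.1.1 /\ (t.1.2 < mup t.1.1 f)%N) /\
  forall p, f %| p - \sum_(t <- s) (p^`(t.1.2)).[t.1.1] *: t.2.

Lemma factorial_neq0 m : m`!%:R != 0 :> F.
Proof.
by apply/negP => /(natf0_pchar (fact_gt0 m)) [p]; rewrite F_char0.
Qed.

(** Correction for a new root b of multiplicity m + 1: if
    g = u ('X - b)^m with u(b) != 0 and G = (m! u(b))^-1 g, then
    subtracting (h g)^(m)(b) G from h g leaves (h - h(b)) g, a multiple of
    ('X - b) g. *)
Lemma hermite_correction (b : F) (u g h : {poly F}) m :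
  g = u * ('X - b%:P) ^+ m -> u.[b] != 0 ->
  ('X - b%:P) * g %| h * g - ((h * g)^`(m)).[b] *: ((m`!%:R * u.[b])^-1 *: g).
Proof.
move=> gE ub0.
have -> : h * g - ((h * g)^`(m)).[b] *: ((m`!%:R * u.[b])^-1 *: g)
    = (h - (h.[b])%:P) * g.
  have -> : h * g = ('X - b%:P) ^+ m * (u * h) by rewrite gE; ring.
  rewrite derivn_XsubCX_mul_eval scalerA hornerM -mulr_natr.
  have -> : u.[b] * h.[b] * m`!%:R * (m`!%:R * u.[b])^-1 = h.[b].
    by field; rewrite factorial_neq0 ub0.
  by rewrite gE -mul_polyC; ring.
apply: dvdp_mul; last exact: dvdpp.
by rewrite dvdp_XsubCl rootE hornerD hornerN hornerC subrr.
Qed.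

(** Adding one root b to f: from a system for g one gets a system for
    ('X - b) * g by adding the triple for the new derivative order at b
    and correcting the old interpolating polynomials. *)
Lemma hermite_system_XsubC_mul (b : F) (g : {poly F}) s :
  g != 0 -> hermite_system g s ->
  exists s', hermite_system (('X - b%:P) * g) s'.
Proof.
move=> gn0 [s_roots s_interp].
have [m [u /= ub0 gE]] := multiplicity_XsubC g b; rewrite gn0 /= in ub0.
have mup_g : mup b g = m by rewrite gE mupMr // mup_XsubCX eqxx.
have XbN0 : 'X - b%:P != 0 by rewrite polyXsubC_eq0.
pose G := (m`!%:R * u.[b])^-1 *: g.
exists ((b, m, G) :: [seq (t.1.1, t.1.2, t.2 - (t.2^`(m)).[b] *: G) | t <- s]).
split.
  move=> t; rewrite inE => /orP [/eqP -> /=|/mapP [t' /s_roots [rt' lt'] ->] /=].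
    split; first by rewrite rootM root_XsubC eqxx.
    by rewrite mupM // mup_g -(expr1 ('X - b%:P)) mup_XsubCX eqxx add1n.
  split; first by rewrite rootM rt' orbT.
  by rewrite mupM // (leq_trans lt') ?leq_addl.
move=> p; have [h pE] := dvdpP _ _ (s_interp p).
set c := fun t : F * nat * {poly F} => (p^`(t.1.2)).[t.1.1].
have interp_m : (p^`(m)).[b] - \sum_(t <- s) c t * (t.2^`(m)).[b]
    = ((h * g)^`(m)).[b].
  by rewrite -pE raddfB /= hornerD hornerN linear_sum horner_sum /=;
    under [in RHS]eq_bigr do rewrite derivnZ hornerZ.
rewrite big_cons big_map /=.
have -> : p - ((p^`(m)).[b] *: G
    + \sum_(t <- s) c t *: (t.2 - (t.2^`(m)).[b] *: G))
    = h * g - ((h * g)^`(m)).[b] *: G.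
  rewrite -interp_m -pE scalerBl.
  under eq_bigr do rewrite scalerBr scalerA.
  rewrite sumrB -scaler_suml; ring.
exact: hermite_correction.
Qed.

Lemma hermite_interpolation (f : {poly F}) : f != 0 ->
  exists s, hermite_system f s.
Proof.
elim: {f}(size f) {-2}f (erefl (size f)) => [|n IH] f szf fn0.
  by move: fn0; rewrite -size_poly_eq0 szf.
have [sz1|/closed_rootP [b /factor_theorem [g fE]]] := eqVneq (size f) 1%N.
  exists [::]; split => // p; have [c c0 ->] := size_poly1P _ (introT eqP sz1).
  by rewrite -alg_polyC dvdpZl // dvd1p.
have gn0 : g != 0 by apply: contraNneq fn0 => g0; rewrite fE g0 mul0r.
have szg : size g = n.
  by move: szf; rewrite fE size_mul ?polyXsubC_eq0 // size_XsubC addn2 => -[].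
have [s gs] := IH g szg gn0.
by rewrite fE mulrC; exact: hermite_system_XsubC_mul gs.
Qed.

End HermiteInterpolation.

Section InnerProductSpace.
Local Open Scope classical_set_scope.
Variable R : realType.
Local Notation C := R[i].
Variable V : lmodType C.
Variable ip : V -> V -> C.
Hypothesis ipP : is_inner_product ip.

Local Notation Q v := (ip v v).

Lemma ipL a u v w : ip (a *: u + v) w = a * ip u w + ip v w.
Proof. by case: ipP. Qed.

Lemma ipC u v : ip u v = (ip v u)^*.
Proof. by case: ipP. Qed.

Lemma Q_ge0 v : 0 <= Q v.
Proof. by case: ipP. Qed.

Lemma ipDl u v w : ip (u + v) w = ip u w + ip v w.
Proof. by have := ipL 1 u v w; rewrite scale1r mul1r. Qed.

Lemma ip0l w : ip 0 w = 0.
Proof. by apply: (@addrI _ (ip 0 w)); rewrite -ipDl !addr0. Qed.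

Lemma ipZl a u w : ip (a *: u) w = a * ip u w.
Proof. by rewrite -[a *: u]addr0 ipL ip0l addr0. Qed.

Lemma ipNl u w : ip (- u) w = - ip u w.
Proof. by rewrite -scaleN1r ipZl mulN1r. Qed.

Lemma ipDr u v w : ip w (u + v) = ip w u + ip w v.
Proof. by rewrite ipC ipDl rmorphD [ip w u]ipC [ip w v]ipC. Qed.

Lemma ipZr a u w : ip w (a *: u) = a^* * ip w u.
Proof. by rewrite ipC ipZl rmorphM [ip w u]ipC. Qed.

Lemma ipNr u w : ip w (- u) = - ip w u.
Proof. by rewrite -scaleN1r ipZr rmorphN1 mulN1r. Qed.

Lemma ip_sumr n (a : 'I_n -> C) (x : 'I_n -> V) w :
  ip w (\sum_(i < n) a i *: x i) = \sum_(i < n) (a i)^* * ip w (x i).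
Proof.
elim: n a x => [|n IH] a x; first by rewrite !big_ord0 ipC ip0l conjC0.
by rewrite !big_ord_recr /= ipDr IH ipZr.
Qed.

Lemma QN v : Q (- v) = Q v.
Proof. by rewrite ipNl ipNr opprK. Qed.

Lemma QZ a v : Q (a *: v) = `|a| ^+ 2 * Q v.
Proof. by rewrite ipZl ipZr mulrA normCK. Qed.

(** The parallelogram law gives the quadratic triangle inequality
    Q(u + v) <= 2 Q(u) + 2 Q(v). *)
Lemma QD u v : Q (u + v) <= 2 * Q u + 2 * Q v.
Proof.
have -> : 2 * Q u + 2 * Q v = Q (u + v) + Q (u - v).
  by rewrite !ipDl !ipDr !ipNl !ipNr; ring.
by rewrite lerDl Q_ge0.
Qed.

Lemma nrm_ge0 v : 0 <= nrm ip v.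
Proof. by rewrite sqrtC_ge0 Q_ge0. Qed.

Lemma nrm_lt_sq v e : 0 < e -> (nrm ip v < e) = (Q v < e ^+ 2).
Proof.
move=> e0; rewrite -[in LHS](sqrCK (ltW e0)) ltr_sqrtC ?nnegrE ?Q_ge0 //.
by rewrite exprn_ge0 // ltW.
Qed.

Lemma bound_sq (c M : C) x : 0 <= M -> `|c| <= M * nrm ip x ->
  `|c| ^+ 2 <= M ^+ 2 * Q x.
Proof.
move=> M0 le_c; rewrite -[Q x]sqrtCK -exprMn !expr2.
by apply: ler_pM => //; apply: normr_ge0.
Qed.

Lemma orth_lspan (A : set V) : orth ip (lspan A) = orth ip A.
Proof.
apply/seteqP; split => v orth_v w Aw.
  apply: orth_v; exists 1%N, (fun=> 1), (fun=> w).
  by split => //; rewrite big_ord1 scale1r.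
case: Aw => n [a [x [Ax ->]]].
by rewrite ip_sumr; apply: big1 => i _; rewrite orth_v ?mulr0.
Qed.

Lemma orth_closureH (A : set V) (w : V) (M : C) :
  0 <= M -> (forall x, `|ip x w| <= M * nrm ip x) ->
  (forall x, A x -> ip x w = 0) -> forall v, closureH ip A v -> ip v w = 0.
Proof.
move=> M0 bound_w Aw v clv; apply/eqP/negPn/negP => nz.
set c := `|ip v w|; have c0 : 0 < c by rewrite normr_gt0.
have [x /Aw xw near_x] := clv (c / (M + 1)) (divr_gt0 c0 (ltr_wpDl M0 ltr01)).
have vxw : ip (v - x) w = ip v w by rewrite ipDl ipNl xw subr0.
have : c <= M * (c / (M + 1)).
  by rewrite {1}/c -vxw (le_trans (bound_w _)) // ler_wpM2l // ltW.
rewrite mulrA ler_pdivlMr ?ltr_wpDl // mulrDr mulr1 mulrC.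
by rewrite gerDl => /(lt_le_trans c0); rewrite ltxx.
Qed.

Lemma closureH_sq (A : set V) v :
  (forall e, 0 < e -> exists2 x, A x & Q (v - x) < e) -> closureH ip A v.
Proof.
move=> near_v e e0; have [x Ax lt_x] := near_v _ (exprn_gt0 2 e0).
by exists x; rewrite // nrm_lt_sq.
Qed.

Lemma Q_sum_bounded (T : eqType) (s : seq T) (c : T -> V -> C) (w : T -> V) :
  (forall t, t \in s -> exists2 M, 0 <= M & forall x, `|c t x| <= M * nrm ip x) ->
  exists2 K, 0 <= K & forall x, Q (\sum_(t <- s) c t x *: w t) <= K * Q x.
Proof.
elim: s => [|t s IH] bounded.
  by exists 0 => // x; rewrite big_nil ip0l mul0r.
have [|K K0 le_K] := IH.
  by move=> t' t's; apply: bounded; rewrite inE t's orbT.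
have [M M0 le_M] := bounded t (mem_head _ _).
exists (2 * (M ^+ 2 * Q (w t)) + 2 * K).
  by rewrite addr_ge0 ?mulr_ge0 ?exprn_ge0 ?Q_ge0.
move=> x; rewrite big_cons; apply: le_trans (QD _ _) _.
rewrite [X in _ <= X]mulrDl -[2 * K * _]mulrA -[2 * _ * Q x]mulrA.
apply: lerD; last exact: ler_wpM2l.
rewrite QZ ler_wpM2l // [X in _ <= X]mulrAC ler_wpM2r ?Q_ge0 //; exact: bound_sq.
Qed.

End InnerProductSpace.

Section Kernels.
Variable R : realType.
Local Notation C := R[i].
Variables (V : lmodType C) (ip : V -> V -> C) (pv : {poly C} -> V).

Lemma kernel_deriv beta l w p :
  is_kernel ip pv beta l w -> ip (pv p) w = (p^`(l)).[beta].
Proof. by case=> L [[_ _ Lpv] Lw]; rewrite Lw Lpv. Qed.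

Lemma kernel_bounded beta l w : is_inner_product ip ->
  is_kernel ip pv beta l w ->
  exists2 M, 0 <= M & forall x, `|ip x w| <= M * nrm ip x.
Proof.
move=> ipP [L [[_ [M le_M] _] Lw]]; exists `|M| => // x.
have := le_M x; rewrite -Lw => le_x.
by rewrite -(ger0_norm (nrm_ge0 ipP x)) -normrM ger0_norm ?(le_trans _ le_x).
Qed.

End Kernels.

Section PolynomialsInH.
Local Open Scope classical_set_scope.
Variable R : realType.
Local Notation C := R[i].
Variables (V : lmodType C) (ip : V -> V -> C).
Variables (Om : set C) (ev : V -> C -> C) (S : V -> V) (pv : {poly C} -> V).
Hypothesis HH : AnalyticHilbertSpace ip Om ev S pv.

Lemma ev_inj u v : (forall z, Om z -> ev u z = ev v z) -> u = v.
Proof. by case: HH => _ [_ ev_injective] _ _ _; apply: ev_injective. Qed.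

Lemma ev_pv p z : Om z -> ev (pv p) z = p.[z].
Proof. by case: HH => _ _ _ _ [ev_poly _]; apply: ev_poly. Qed.

Lemma pv_lin a p q : pv (a *: p + q) = a *: pv p + pv q.
Proof.
case: HH => _ [ev_linear _] _ _ _.
by apply: ev_inj => z Oz; rewrite ev_linear !ev_pv // hornerD hornerZ.
Qed.

Lemma pvD p q : pv (p + q) = pv p + pv q.
Proof. by have := pv_lin 1 p q; rewrite !scale1r. Qed.

Lemma pv0 : pv 0 = 0.
Proof. by apply: (@addrI _ (pv 0)); rewrite -pvD !addr0. Qed.

Lemma pvZ a p : pv (a *: p) = a *: pv p.
Proof. by rewrite -[a *: p]addr0 pv_lin pv0 addr0. Qed.

Lemma pvB p q : pv (p - q) = pv p - pv q.
Proof. by rewrite pvD -[- q]scaleN1r pvZ scaleN1r. Qed.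

Lemma pv_sum (I : Type) (r : seq I) (F : I -> {poly C}) :
  pv (\sum_(i <- r) F i) = \sum_(i <- r) pv (F i).
Proof. exact: (big_morph pv pvD pv0). Qed.

Lemma iter_S_pv (f : {poly C}) n : iter n S (pv f) = pv ('X^n * f).
Proof.
case: HH => _ _ _ [ev_shift _] _.
elim: n => [|n IH]; first by rewrite expr0 mul1r.
apply: ev_inj => z Oz; rewrite iterS ev_shift // IH !ev_pv //.
by rewrite exprS -mulrA [in RHS]hornerM hornerX.
Qed.

Lemma lspan_orbit (f : {poly C}) :
  lspan [set iter n S (pv f) | n in [set: nat]]
  = [set pv (q * f) | q in [set: {poly C}]].
Proof.
apply/seteqP; split => v.
  case=> n [a [x [orbit_x ->]]].
  elim: n a x orbit_x => [|n IH] a x orbit_x.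
    by exists 0 => //; rewrite big_ord0 mul0r pv0.
  have [|q _ qE] := IH (fun i => a (widen_ord (leqnSn n) i))
    (fun i => x (widen_ord (leqnSn n) i)); first by move=> i; apply: orbit_x.
  have [m _ xE] := orbit_x ord_max.
  exists (q + a ord_max *: 'X^m) => //.
  by rewrite big_ord_recr /= -qE -xE iter_S_pv mulrDl pvD -scalerAl pvZ.
case=> q _ <-; exists (size q), (fun i => q`_i), (fun i => iter i S (pv f)).
split; first by move=> i; exists i.
rewrite -{1}(coefK q) poly_def mulr_suml pv_sum; apply: eq_bigr => i _.
by rewrite -scalerAl pvZ iter_S_pv.
Qed.

Lemma cyc_pv (f : {poly C}) :
  cyc ip S (pv f) = closureH ip [set pv (q * f) | q in [set: {poly C}]].
Proof. by rewrite /cyc lspan_orbit. Qed.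

Lemma pv_dense_sq v e : 0 < e -> exists p, ip (v - pv p) (v - pv p) < e.
Proof.
case: HH => [[_ [ipP _]]] _ _ _ [_ dense] e0.
have se0 : 0 < sqrtC e by rewrite sqrtC_gt0.
have [p near_p] := dense v _ se0.
by exists p; move: near_p; rewrite nrm_lt_sq // sqrtCK.
Qed.

End PolynomialsInH.

Section CyclicSubspaceOfAPolynomial.
Local Open Scope classical_set_scope.
Variable R : realType.
Local Notation C := R[i].
Variables (V : lmodType C) (ip : V -> V -> C).
Variables (Om : set C) (ev : V -> C -> C) (S : V -> V) (pv : {poly C} -> V).
Hypothesis HH : AnalyticHilbertSpace ip Om ev S pv.
Variables (f : {poly C}) (k : C -> nat -> V).
Hypothesis hk : forall beta l, root f beta -> (l < Zmult f beta)%N ->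
  is_kernel ip pv beta l (k beta l).

Let ipP : is_inner_product ip. Proof. by case: HH => [[_ []]]. Qed.

Definition root_kernels : set V :=
  [set w | exists beta l, [/\ root f beta, (l < Zmult f beta)%N & w = k beta l]].

Let multiples : set V := [set pv (q * f) | q in [set: {poly C}]].

(** Every kernel annihilates the multiples of f, hence, being bounded,
    also their closure [f]. *)
Lemma cyc_sub_orth_kernels : closureH ip multiples `<=` orth ip root_kernels.
Proof.
move=> v clv _ [beta [l [rb lb ->]]].
have [M M0 bound_k] := kernel_bounded ipP (hk rb lb).
apply: (orth_closureH ipP M0 bound_k) clv => _ [q _ <-].
by rewrite (kernel_deriv _ (hk rb lb)) derivn_mul_vanish.
Qed.

(** Conversely, if g is orthogonal to the kernels, approximate g by a
    polynomial p and replace p by its remainder p - sum_t p^(l)(beta) G_t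
    in a Hermite system of f: it is a multiple of f, and the correction is
    controlled by <p - g, k_t> = p^(l)(beta), i.e. by the distance from g
    to p. *)
Lemma orth_kernels_sub_cyc : f != 0 ->
  orth ip root_kernels `<=` closureH ip multiples.
Proof.
move=> f_neq0 g g_orth.
have [s [s_roots s_interp]] := hermite_interpolation (@pchar_num C) f_neq0.
pose kt (t : C * nat * {poly C}) := k t.1.1 t.1.2.
have kt_orth t : t \in s -> ip g (kt t) = 0.
  by case/s_roots=> rb lb; apply: g_orth; exists t.1.1, t.1.2.
have kt_bounded t : t \in s ->
    exists2 M, 0 <= M & forall x, `|ip x (kt t)| <= M * nrm ip x.
  by case/s_roots=> rb lb; apply: kernel_bounded ipP (hk rb lb).
have [K K0 le_K] :=
  Q_sum_bounded ipP (c := fun t x => ip x (kt t)) (fun t => pv t.2) kt_bounded.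
apply: (closureH_sq ipP) => e e0.
have D0 : 0 < 2 + 2 * K by rewrite ltr_wpDr ?mulr_ge0.
have [p near_p] := pv_dense_sq HH g (divr_gt0 e0 D0).
have [q pE] := dvdpP _ _ (s_interp p).
exists (pv (q * f)); first by exists q.
have -> : g - pv (q * f)
    = (g - pv p) + \sum_(t <- s) ip (pv p - g) (kt t) *: pv t.2.
  rewrite -pE (pvB HH) (pv_sum HH) opprB addrCA [LHS]addrC; congr (_ + _).
  rewrite big_seq_cond [RHS]big_seq_cond; apply: eq_bigr => t /andP [ts _].
  have [rb lb] := s_roots t ts.
  rewrite (pvZ HH) (ipDl ipP) (ipNl ipP) kt_orth // subr0.
  by rewrite (kernel_deriv _ (hk rb lb)).
have le_sum := le_K (pv p - g).
have Q_sym : ip (pv p - g) (pv p - g) = ip (g - pv p) (g - pv p).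
  by rewrite -(QN ipP) opprB.
rewrite Q_sym in le_sum.
apply: le_lt_trans (QD ipP _ _) _.
apply: le_lt_trans (lerD (lexx _) (ler_wpM2l _ le_sum)) _ => //.
by rewrite mulrA -mulrDl mulrC -ltr_pdivlMr.
Qed.

End CyclicSubspaceOfAPolynomial.

Theorem mainTheorem5 (R : realType) (Om : set R[i]) (V : lmodType R[i])
  (ip : V -> V -> R[i]) (ev : V -> R[i] -> R[i]) (S : V -> V)
  (pv : {poly R[i]} -> V)
  (HH : AnalyticHilbertSpace ip Om ev S pv)
  (f : {poly R[i]}) (f_neq0 : f != 0)
  (RZ : forall beta, Rmult ip pv f beta = Zmult f beta)
  (k : R[i] -> nat -> V)
  (hk : forall beta l, root f beta -> (l < Zmult f beta)%N ->
          is_kernel ip pv beta l (k beta l)) :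
  cyc ip S (pv f) =
  orth ip (lspan [set w | exists beta l,
     [/\ root f beta, (l < Zmult f beta)%N & w = k beta l]]).
Proof.
have ipP : is_inner_product ip by case: HH => [[_ []]].
rewrite (cyc_pv HH) (orth_lspan ipP); apply/seteqP; split.
- exact: (cyc_sub_orth_kernels HH hk).
- exact: (orth_kernels_sub_cyc HH hk f_neq0).
Qed.
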